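(* Let $R$ be a set of $n$ red points and $B$ a set of $n$ blue points, all distinct and on the line $y=0$, given sorted by $x$-coordinate. Then a minimum-weight non-crossing bichromatic perfect matching of $R\cup B$ (with arcs drawn above $y=0$) can be computed in $O(n)$ time. *)

From Stdlib Require Import Reals ZArith List.
Open Scope R_scope.

(* Red points have x-coordinates r 0 < ... < r (n-1),                *)
(* blue points b 0 < ... < b (n-1), all on the line y = 0.           *)
(* A bichromatic perfect matching is a bijection f of {0..n-1}:      *)
(* red i is matched with blue (f i).                                 *)

Definition strictly_sorted (n : nat) (x : nat -> R) : Prop :=
  forall i j, (i < j < n)%nat -> x i < x j.

Definition input_ok (n : nat) (r b : nat -> R) : Prop :=
  strictly_sorted n r /\ strictly_sorted n b /\
  (forall i j, (i < n)%nat -> (j < n)%nat -> r i <> b j).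

Definition is_bichromatic_perfect_matching (n : nat) (f : nat -> nat) : Prop :=
  (forall i, (i < n)%nat -> (f i < n)%nat) /\
  (forall i j, (i < n)%nat -> (j < n)%nat -> f i = f j -> i = j).

(* The arc of red i is drawn above y = 0 between its endpoints. *)
Definition arc_lo (r b : nat -> R) (f : nat -> nat) (i : nat) : R :=
  Rmin (r i) (b (f i)).
Definition arc_hi (r b : nat -> R) (f : nat -> nat) (i : nat) : R :=
  Rmax (r i) (b (f i)).

(* Two upper arcs with distinct endpoints cross iff their endpoints interleave. *)
Definition arcs_cross (r b : nat -> R) (f : nat -> nat) (i j : nat) : Prop :=
  arc_lo r b f i < arc_lo r b f j < arc_hi r b f i /\
  arc_hi r b f i < arc_hi r b f j.

Definition non_crossing (n : nat) (r b : nat -> R) (f : nat -> nat) : Prop :=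
  forall i j, (i < n)%nat -> (j < n)%nat -> i <> j -> ~ arcs_cross r b f i j.

Fixpoint sumR (n : nat) (F : nat -> R) : R :=
  match n with
  | O => 0
  | S m => sumR m F + F m
  end.

Definition weight (n : nat) (r b : nat -> R) (f : nat -> nat) : R :=
  sumR n (fun i => Rabs (r i - b (f i))).

Definition is_nc_matching (n : nat) (r b : nat -> R) (f : nat -> nat) : Prop :=
  is_bichromatic_perfect_matching n f /\ non_crossing n r b f.

Definition is_min_nc_matching (n : nat) (r b : nat -> R) (f : nat -> nat) : Prop :=
  is_nc_matching n r b f /\
  forall g, is_nc_matching n r b g -> weight n r b f <= weight n r b g.

(* Machine model: a real RAM with unit-cost instructions.            *)

Inductive instr : Type :=
| ZConst (d : nat) (k : Z)
| ZAdd (d s1 s2 : nat)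
| ZSub (d s1 s2 : nat)
| ZLoadInd (d a : nat)
| ZStoreInd (a s : nat)
| RLoadInd (d a : nat)
| RStoreInd (a s : nat)
| RAdd (d s1 s2 : nat)
| RSub (d s1 s2 : nat)
| JZLt (s1 s2 t : nat)
| JZEq (s1 s2 t : nat)
| JRLt (s1 s2 t : nat)
| Jmp (t : nat)
| Halt.

Record state : Type := mkState { pc : nat; zm : nat -> Z; rm : nat -> R }.

Definition upd {A : Type} (m : nat -> A) (a : nat) (v : A) : nat -> A :=
  fun x => if Nat.eqb x a then v else m x.

(* One step; None means the machine has halted (Halt or pc out of range). *)
Definition step (p : list instr) (s : state) : option state :=
  let z := zm s in let m := rm s in let k := S (pc s) in
  match nth_error p (pc s) with
  | None => None
  | Some Halt => None
  | Some (ZConst d v) => Some (mkState k (upd z d v) m)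
  | Some (ZAdd d s1 s2) => Some (mkState k (upd z d (z s1 + z s2)%Z) m)
  | Some (ZSub d s1 s2) => Some (mkState k (upd z d (z s1 - z s2)%Z) m)
  | Some (ZLoadInd d a) => Some (mkState k (upd z d (z (Z.to_nat (z a)))) m)
  | Some (ZStoreInd a s0) => Some (mkState k (upd z (Z.to_nat (z a)) (z s0)) m)
  | Some (RLoadInd d a) => Some (mkState k z (upd m d (m (Z.to_nat (z a)))))
  | Some (RStoreInd a s0) => Some (mkState k z (upd m (Z.to_nat (z a)) (m s0)))
  | Some (RAdd d s1 s2) => Some (mkState k z (upd m d (m s1 + m s2)))
  | Some (RSub d s1 s2) => Some (mkState k z (upd m d (m s1 - m s2)))
  | Some (JZLt s1 s2 t) => Some (mkState (if Z.ltb (z s1) (z s2) then t else k) z m)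
  | Some (JZEq s1 s2 t) => Some (mkState (if Z.eqb (z s1) (z s2) then t else k) z m)
  | Some (JRLt s1 s2 t) =>
      Some (mkState (if Rlt_dec (m s1) (m s2) then t else k) z m)
  | Some (Jmp t) => Some (mkState t z m)
  end.

(* exec p k s = Some s' : started in s, the machine halts after at most k
   steps, in final state s'. *)
Fixpoint exec (p : list instr) (k : nat) (s : state) : option state :=
  match step p s with
  | None => Some s
  | Some s' => match k with O => None | S k' => exec p k' s' end
  end.

(* Input encoding: Z[0] = n; Rm[i] = r i (i < n), Rm[n+j] = b j (j < n);
   all other cells 0.  Output: Z[1+i] = index of the blue partner of red i. *)
Definition init_state (n : nat) (r b : nat -> R) : state :=
  mkState 0
    (fun a => if Nat.eqb a 0 then Z.of_nat n else 0%Z)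
    (fun a => if Nat.ltb a n then r a
              else if Nat.ltb a (n + n) then b (a - n)%nat else 0).

Definition output_matching (s : state) : nat -> nat :=
  fun i => Z.to_nat (zm s (S i)).

From Stdlib Require Import Reals ZArith List Lia Lra Permutation Sorted.
Import ListNotations.

(* The points are swept from left to right.  The processed points that are still
   unmatched form a stack, all of one colour; a point of the other colour is
   matched with the top of the stack (the nearest unmatched point to its left),
   otherwise it is pushed.  Matched arcs are therefore nested or disjoint.
   Optimality, even among all perfect matchings, comes from LP duality: the sweep
   maintains potentials with pR i - pB j <= |r i - b j| for all processed pairs and
   equality on the matched ones, so that weight f = sum pR - sum pB <= weight g
   for every bijection g.  On the real RAM, the sweep takes at most 18
   instructions per point, after a linear-time copy of the input. *)

Open Scope R_scope.

Lemma sumR_ext n F G : (forall i, (i < n)%nat -> F i = G i) -> sumR n F = sumR n G.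
Proof.
  induction n as [|n IH]; intros H; simpl; [reflexivity|].
  rewrite IH by (intros; apply H; lia). rewrite H by lia. reflexivity.
Qed.

Lemma sumR_minus n F G : sumR n (fun i => F i - G i) = sumR n F - sumR n G.
Proof. induction n as [|n IH]; simpl; [lra|]. rewrite IH; lra. Qed.

Lemma sumR_le n F G : (forall i, (i < n)%nat -> F i <= G i) -> sumR n F <= sumR n G.
Proof.
  induction n as [|n IH]; intros H; simpl; [lra|].
  assert (F n <= G n) by (apply H; lia).
  assert (sumR n F <= sumR n G) by (apply IH; intros; apply H; lia).
  lra.
Qed.

Lemma sumR_fold_right n F : sumR n F = fold_right Rplus 0 (map F (seq 0 n)).
Proof.
  induction n as [|n IH]; [reflexivity|].
  cbn [sumR]. rewrite seq_S, map_app, fold_right_app, IH. simpl.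
  generalize (F n); clear IH. induction (map F (seq 0 n)) as [|x l IHl]; intros y; simpl.
  - lra.
  - rewrite <- IHl. lra.
Qed.

Lemma fold_right_Rplus_perm l l' : Permutation l l' -> fold_right Rplus 0 l = fold_right Rplus 0 l'.
Proof. induction 1; simpl; lra. Qed.

Lemma sumR_reindex n F f :
  is_bichromatic_perfect_matching n f -> sumR n (fun i => F (f i)) = sumR n F.
Proof.
  intros [Hrange Hinj]. rewrite !sumR_fold_right, <- map_map.
  apply fold_right_Rplus_perm, Permutation_map, NoDup_Permutation_bis.
  - apply NoDup_map_NoDup_ForallPairs; [|apply seq_NoDup].
    intros x y Hx Hy. apply in_seq in Hx, Hy. apply Hinj; lia.
  - rewrite length_map, !length_seq; lia.
  - intros x Hx. apply in_map_iff in Hx as [y [<- Hy]]. apply in_seq in Hy. apply in_seq.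
    specialize (Hrange y). lia.
Qed.

Lemma assignment_weak_duality n (cost : nat -> nat -> R) (pR pB : nat -> R) f g :
  is_bichromatic_perfect_matching n f -> is_bichromatic_perfect_matching n g ->
  (forall i j, (i < n)%nat -> (j < n)%nat -> pR i - pB j <= cost i j) ->
  (forall i, (i < n)%nat -> pR i - pB (f i) = cost i (f i)) ->
  sumR n (fun i => cost i (f i)) <= sumR n (fun i => cost i (g i)).
Proof.
  intros Hf Hg Hfeas Htight.
  rewrite (sumR_ext n _ (fun i => pR i - pB (f i))) by (intros; symmetry; auto).
  rewrite sumR_minus, (sumR_reindex n pB f Hf).
  apply Rle_trans with (sumR n (fun i => pR i - pB (g i))).
  - rewrite sumR_minus, (sumR_reindex n pB g Hg). lra.
  - apply sumR_le. intros i Hi. apply Hfeas; [lia|apply (proj1 Hg); lia].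
Qed.

Lemma upd_same {A} (f : nat -> A) a v : upd f a v a = v.
Proof. unfold upd; rewrite Nat.eqb_refl; reflexivity. Qed.

Lemma upd_eq {A} (f : nat -> A) a v x : x = a -> upd f a v x = v.
Proof. intros ->; apply upd_same. Qed.

Lemma upd_other {A} (f : nat -> A) a v x : x <> a -> upd f a v x = f x.
Proof. intros H; unfold upd; destruct (Nat.eqb_spec x a); [contradiction|reflexivity]. Qed.

Lemma arc_lo_ext r b f g t : f t = g t -> arc_lo r b f t = arc_lo r b g t.
Proof. unfold arc_lo; intros ->; reflexivity. Qed.

Lemma arc_hi_ext r b f g t : f t = g t -> arc_hi r b f t = arc_hi r b g t.
Proof. unfold arc_hi; intros ->; reflexivity. Qed.

Lemma arcs_cross_ext r b f g t1 t2 : f t1 = g t1 -> f t2 = g t2 ->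
  arcs_cross r b f t1 t2 -> arcs_cross r b g t1 t2.
Proof.
  unfold arcs_cross; intros H1 H2.
  rewrite (arc_lo_ext r b f g t1), (arc_lo_ext r b f g t2), (arc_hi_ext r b f g t1),
    (arc_hi_ext r b f g t2) by assumption; tauto.
Qed.

Lemma arc_hi_lt r b f t x : r t < x -> b (f t) < x -> arc_hi r b f t < x.
Proof. unfold arc_hi; intros; apply Rmax_lub_lt; assumption. Qed.

Lemma arc_of_blue_left r b f t :
  b (f t) < r t -> arc_lo r b f t = b (f t) /\ arc_hi r b f t = r t.
Proof. unfold arc_lo, arc_hi; intros; split; [apply Rmin_right|apply Rmax_left]; lra. Qed.

Lemma arc_of_red_left r b f t :
  r t < b (f t) -> arc_lo r b f t = r t /\ arc_hi r b f t = b (f t).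
Proof. unfold arc_lo, arc_hi; intros; split; [apply Rmin_left|apply Rmax_right]; lra. Qed.

Lemma is_min_nc_matching_ext n r b f g :
  (forall i, (i < n)%nat -> g i = f i) -> is_min_nc_matching n r b f -> is_min_nc_matching n r b g.
Proof.
  intros E [[[Hrange Hinj] Hnc] Hmin].
  assert (Hw : weight n r b g = weight n r b f)
    by (unfold weight; apply sumR_ext; intros i Hi; rewrite E; auto).
  split; [split; [split|]|].
  - intros i Hi; rewrite E; auto.
  - intros i j Hi Hj Hij; rewrite !E in Hij; auto.
  - intros i j Hi Hj Hne Hc. apply (Hnc i j Hi Hj Hne). revert Hc; apply arcs_cross_ext; apply E; auto.
  - intros g' Hg'. rewrite Hw. apply Hmin; auto.
Qed.

Section Input.

Variables (n : nat) (r b : nat -> R).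
Hypothesis Hinput : input_ok n r b.

Lemma red_lt i j : (i < j < n)%nat -> r i < r j.
Proof. apply Hinput. Qed.

Lemma blue_lt i j : (i < j < n)%nat -> b i < b j.
Proof. apply Hinput. Qed.

Lemma red_le i j : (i <= j < n)%nat -> r i <= r j.
Proof. intros. destruct (Nat.eq_dec i j); [subst; lra|]. left; apply red_lt; lia. Qed.

Lemma blue_le i j : (i <= j < n)%nat -> b i <= b j.
Proof. intros. destruct (Nat.eq_dec i j); [subst; lra|]. left; apply blue_lt; lia. Qed.

Lemma red_neq_blue i j : (i < n)%nat -> (j < n)%nat -> r i <> b j.
Proof. apply Hinput. Qed.

End Input.

(** * The sweep *)

(* [stack_blue] is the colour of the stacked points (irrelevant when the stack is
   empty), and [partner t] is the blue partner of red t once t is matched. *)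
Record sweep_state := SweepState {
  next_red : nat; next_blue : nat;
  stack : list nat; stack_blue : bool;
  partner : nat -> nat }.

Definition sweep_start : sweep_state := SweepState 0 0 [] false (fun _ => 0%nat).

Definition sweep_red (s : sweep_state) : sweep_state :=
  match stack s, stack_blue s with
  | t :: rest, true =>
      SweepState (S (next_red s)) (next_blue s) rest true (upd (partner s) (next_red s) t)
  | _, _ => SweepState (S (next_red s)) (next_blue s) (next_red s :: stack s) false (partner s)
  end.

Definition sweep_blue (s : sweep_state) : sweep_state :=
  match stack s, stack_blue s with
  | t :: rest, false =>
      SweepState (next_red s) (S (next_blue s)) rest false (upd (partner s) t (next_blue s))
  | _, _ => SweepState (next_red s) (S (next_blue s)) (next_blue s :: stack s) true (partner s)
  end.

Definition red_comes_next n r b (s : sweep_state) : bool :=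
  Nat.ltb (next_red s) n &&
  (Nat.eqb (next_blue s) n || if Rlt_dec (r (next_red s)) (b (next_blue s)) then true else false).

Definition sweep_step n r b (s : sweep_state) : sweep_state :=
  if red_comes_next n r b s then sweep_red s else sweep_blue s.

Definition sweep n r b : sweep_state := Nat.iter (n + n) (sweep_step n r b) sweep_start.

Definition stack_point (r b : nat -> R) (blue : bool) (t : nat) : R := if blue then b t else r t.

Definition red_matched (s : sweep_state) (t : nat) : Prop :=
  (t < next_red s)%nat /\ ~ (stack_blue s = false /\ In t (stack s)).

Record sweep_inv n r b (s : sweep_state) : Prop := {
  inv_next_red : (next_red s <= n)%nat;
  inv_next_blue : (next_blue s <= n)%nat;
  inv_red_before : forall i j, (i < next_red s)%nat -> (next_blue s <= j < n)%nat -> r i < b j;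
  inv_blue_before : forall i j, (j < next_blue s)%nat -> (next_red s <= i < n)%nat -> b j < r i;
  inv_stack_length :
    if stack_blue s then (next_red s <= next_blue s /\ length (stack s) = next_blue s - next_red s)%nat
    else (next_blue s <= next_red s /\ length (stack s) = next_red s - next_blue s)%nat;
  inv_stack_processed : forall t, In t (stack s) ->
    if stack_blue s then (t < next_blue s)%nat else (t < next_red s)%nat;
  inv_stack_sorted : StronglySorted (fun x y => (y < x)%nat) (stack s);
  inv_partner_processed : forall t, red_matched s t -> (partner s t < next_blue s)%nat;
  inv_partner_inj : forall t1 t2, red_matched s t1 -> red_matched s t2 ->
    partner s t1 = partner s t2 -> t1 = t2;
  inv_partner_unstacked : stack_blue s = true -> forall t, red_matched s t ->
    ~ In (partner s t) (stack s);
  inv_non_crossing : forall t1 t2, red_matched s t1 -> red_matched s t2 -> t1 <> t2 ->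
    ~ arcs_cross r b (partner s) t1 t2;
  inv_stack_uncovered : forall t u, red_matched s t -> In u (stack s) ->
    ~ (arc_lo r b (partner s) t < stack_point r b (stack_blue s) u < arc_hi r b (partner s) t)
}.

(* The dual certificate maintained by the sweep.  The sweep line is at [a]; every
   processed point [p] has a potential within distance [a - p] of the level [v],
   with equality for the points waiting on the stack. *)
Record potentials n r b (s : sweep_state) (a v : R) (pR pB : nat -> R) : Prop := {
  pot_red_ahead : forall i, (next_red s <= i < n)%nat -> a <= r i;
  pot_blue_ahead : forall j, (next_blue s <= j < n)%nat -> a <= b j;
  pot_red_near : forall i, (i < next_red s)%nat -> Rabs (v - pR i) <= a - r i;
  pot_blue_near : forall j, (j < next_blue s)%nat -> Rabs (v - pB j) <= a - b j;
  pot_feasible : forall i j, (i < next_red s)%nat -> (j < next_blue s)%nat ->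
    pR i - pB j <= Rabs (r i - b j);
  pot_stack_tight : forall u, In u (stack s) ->
    if stack_blue s then v - pB u = a - b u else pR u - v = a - r u;
  pot_matched_tight : forall t, red_matched s t ->
    pR t - pB (partner s t) = Rabs (r t - b (partner s t))
}.

Definition sweep_ok n r b (s : sweep_state) : Prop :=
  sweep_inv n r b s /\ exists a v pR pB, potentials n r b s a v pR pB.

Lemma stack_below_top (l : list nat) t u :
  StronglySorted (fun x y => (y < x)%nat) (t :: l) -> In u l -> (u < t)%nat.
Proof. intros H Hu. apply StronglySorted_inv in H as [_ H]. rewrite Forall_forall in H. auto. Qed.

Lemma red_matched_all s t : stack_blue s = true -> red_matched s t <-> (t < next_red s)%nat.
Proof. unfold red_matched; intros ->; split; [tauto|intuition discriminate]. Qed.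

Lemma red_matched_red_push i j st blue p t :
  red_matched (SweepState (S i) j (i :: st) false p) t ->
  red_matched (SweepState i j st blue p) t /\ (t < i)%nat.
Proof.
  intros [H1 H2]; cbn in *. assert (t <> i) by (intros ->; apply H2; auto).
  split; [split; cbn; [lia|]|lia]. intros [_ H3]; apply H2; auto.
Qed.

Lemma red_matched_blue_pop i j t0 rest p t :
  red_matched (SweepState i (S j) rest false (upd p t0 j)) t ->
  t = t0 \/ (red_matched (SweepState i j (t0 :: rest) false p) t /\ t <> t0).
Proof.
  intros [H1 H2]; cbn in *. destruct (Nat.eq_dec t t0); [left; auto|right].
  split; auto. split; cbn; auto. intros [_ [H3|H3]]; [congruence|]. apply H2; auto.
Qed.

Section Sweep.

Variables (n : nat) (r b : nat -> R).
Hypothesis Hinput : input_ok n r b.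

Lemma sweep_inv_red_pop i j t0 rest p :
  sweep_inv n r b (SweepState i j (t0 :: rest) true p) -> (i < n)%nat ->
  (j = n \/ r i < b j) ->
  sweep_inv n r b (SweepState (S i) j rest true (upd p i t0)).
Proof.
  intros [Hnr Hnb Hrb Hbr Hlen Hproc Hsorted Hpproc Hpinj Hunst Hnc Hunc] Hi Hnext; simpl in *.
  assert (Ht0j : (t0 < j)%nat) by (apply (Hproc t0); left; auto).
  assert (Hb0 : b t0 < r i) by (apply Hbr; lia).
  pose proof (fun t => red_matched_all (SweepState i j (t0 :: rest) true p) t eq_refl) as Mo.
  pose proof (fun t => red_matched_all (SweepState (S i) j rest true (upd p i t0)) t eq_refl) as Mn.
  cbn [next_red] in Mo, Mn.
  assert (Eo : forall t, (t < i)%nat -> upd p i t0 t = p t) by (intros; apply upd_other; lia).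
  assert (Hhi : forall t, (t < i)%nat -> arc_hi r b p t < r i).
  { intros t Ht. apply arc_hi_lt; [apply (red_lt n r b Hinput); lia|].
    apply Hbr; [apply Hpproc, Mo; auto|lia]. }
  constructor; cbn [next_red next_blue stack stack_blue partner].
  - lia.
  - lia.
  - intros i' j' Hi' Hj'. destruct (Nat.eq_dec i' i); [subst|apply Hrb; lia].
    destruct Hnext as [Hnext|Hnext]; [lia|].
    eapply Rlt_le_trans; [apply Hnext|]. apply (blue_le n r b Hinput); lia.
  - intros i' j' Hj' Hi'. apply Hbr; lia.
  - simpl in Hlen. lia.
  - intros t Ht. apply Hproc; right; auto.
  - apply StronglySorted_inv in Hsorted; tauto.
  - intros t Ht%Mn. destruct (Nat.eq_dec t i); [subst; rewrite upd_same; auto|].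
    rewrite Eo by lia. apply Hpproc, Mo; lia.
  - intros t1 t2 H1%Mn H2%Mn.
    destruct (Nat.eq_dec t1 i); destruct (Nat.eq_dec t2 i); subst; auto.
    + rewrite upd_same, Eo by lia. intros E. exfalso.
      apply (Hunst eq_refl t2); [apply Mo; lia|]. rewrite <- E; left; auto.
    + rewrite upd_same, Eo by lia. intros E. exfalso.
      apply (Hunst eq_refl t1); [apply Mo; lia|]. rewrite E; left; auto.
    + rewrite !Eo by lia. intros; apply Hpinj; auto; apply Mo; lia.
  - intros _ t Ht%Mn Hin2. destruct (Nat.eq_dec t i).
    + subst. rewrite upd_same in Hin2. pose proof (stack_below_top _ _ _ Hsorted Hin2). lia.
    + rewrite Eo in Hin2 by lia. apply (Hunst eq_refl t); [apply Mo; lia|right; auto].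
  - (* The new arc is [b t0, r i]: older arcs end before r i, and none covers the
       stacked point b t0. *)
    destruct (arc_of_blue_left r b (upd p i t0) i) as [Hl1 Hl2]; [rewrite upd_same; auto|].
    intros t1 t2 H1%Mn H2%Mn Hne Hc.
    destruct (Nat.eq_dec t1 i); destruct (Nat.eq_dec t2 i); subst; [lia| | |].
    + unfold arcs_cross in Hc. rewrite (arc_hi_ext r b _ p t2) in Hc by (apply Eo; lia).
      specialize (Hhi t2 ltac:(lia)). lra.
    + unfold arcs_cross in Hc.
      rewrite (arc_hi_ext r b _ p t1), (arc_lo_ext r b _ p t1) in Hc by (apply Eo; lia).
      rewrite upd_same in Hl1.
      apply (Hunc t1 t0); [apply Mo; lia|left; auto|]. simpl. lra.
    + apply (Hnc t1 t2); [apply Mo; lia|apply Mo; lia|auto|].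
      revert Hc; apply arcs_cross_ext; apply Eo; lia.
  - intros t u Ht%Mn Hu Hc. destruct (Nat.eq_dec t i).
    + subst. destruct (arc_of_blue_left r b (upd p i t0) i) as [E1 E2]; [rewrite upd_same; auto|].
      rewrite E1, upd_same in Hc. simpl in Hc. pose proof (stack_below_top _ _ _ Hsorted Hu).
      assert (b u < b t0) by (apply (blue_lt n r b Hinput); lia). lra.
    + rewrite (arc_hi_ext r b _ p t), (arc_lo_ext r b _ p t) in Hc by (apply Eo; lia).
      apply (Hunc t u); [apply Mo; lia|right; auto|auto].
Qed.

Lemma sweep_inv_red_push i j st blue p :
  sweep_inv n r b (SweepState i j st blue p) -> (i < n)%nat ->
  (j = n \/ r i < b j) -> (st = [] \/ blue = false) ->
  sweep_inv n r b (SweepState (S i) j (i :: st) false p).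
Proof.
  intros [Hnr Hnb Hrb Hbr Hlen Hproc Hsorted Hpproc Hpinj Hunst Hnc Hunc] Hi Hnext Hst; simpl in *.
  pose proof (red_matched_red_push i j st blue p) as Mf.
  assert (Hsti : forall u, In u st -> blue = false /\ (u < i)%nat).
  { intros u Hu. destruct Hst as [ -> | -> ]; [destruct Hu|]. split; [auto|apply (Hproc u Hu)]. }
  constructor; cbn [next_red next_blue stack stack_blue partner].
  - lia.
  - lia.
  - intros i' j' Hi' Hj'. destruct (Nat.eq_dec i' i); [subst|apply Hrb; lia].
    destruct Hnext as [Hnext|Hnext]; [lia|].
    eapply Rlt_le_trans; [apply Hnext|]. apply (blue_le n r b Hinput); lia.
  - intros i' j' Hj' Hi'. apply Hbr; lia.
  - destruct blue; [destruct Hst as [ -> |]; [cbn [length] in *; lia|discriminate]|].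
    cbn [length] in Hlen |- *; lia.
  - intros t [ <- |Ht]; [lia|]. apply Hsti in Ht; lia.
  - constructor; auto. rewrite Forall_forall. intros u Hu. apply Hsti in Hu; lia.
  - intros t Ht%Mf. apply Hpproc; tauto.
  - intros t1 t2 H1%Mf H2%Mf. apply Hpinj; tauto.
  - discriminate.
  - intros t1 t2 H1%Mf H2%Mf. apply Hnc; tauto.
  - intros t u [Ht _]%Mf [ <- |Hu] Hc; simpl in Hc.
    + assert (arc_hi r b p t < r i); [|lra].
      apply arc_hi_lt; [apply (red_lt n r b Hinput); destruct Ht; simpl in *; lia|].
      apply Hbr; [apply Hpproc; auto|lia].
    + destruct (Hsti u Hu) as [Hc0 _]. subst blue. apply (Hunc t u); auto.
Qed.

Lemma sweep_inv_blue_pop i j t0 rest p :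
  sweep_inv n r b (SweepState i j (t0 :: rest) false p) -> (j < n)%nat ->
  (i = n \/ b j < r i) ->
  sweep_inv n r b (SweepState i (S j) rest false (upd p t0 j)).
Proof.
  intros [Hnr Hnb Hrb Hbr Hlen Hproc Hsorted Hpproc Hpinj Hunst Hnc Hunc] Hj Hnext; simpl in *.
  set (s := SweepState i j (t0 :: rest) false p).
  assert (Ht0i : (t0 < i)%nat) by (apply (Hproc t0); left; auto).
  assert (Hb0 : r t0 < b j) by (apply Hrb; lia).
  pose proof (red_matched_blue_pop i j t0 rest p) as Mn.
  assert (Eo : forall t, t <> t0 -> upd p t0 j t = p t) by (intros; apply upd_other; auto).
  assert (Hhi : forall t, red_matched s t -> arc_hi r b p t < b j).
  { intros t Ht. pose proof (proj1 Ht) as Ht'; simpl in Ht'. apply arc_hi_lt; [apply Hrb; lia|].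
    specialize (Hpproc t Ht). simpl in Hpproc. apply (blue_lt n r b Hinput); lia. }
  constructor; cbn [next_red next_blue stack stack_blue partner].
  - lia.
  - lia.
  - intros i' j' Hi' Hj'. apply Hrb; lia.
  - intros i' j' Hj' Hi'. destruct (Nat.eq_dec j' j); [subst|apply Hbr; lia].
    destruct Hnext as [Hnext|Hnext]; [lia|].
    eapply Rlt_le_trans; [apply Hnext|]. apply (red_le n r b Hinput); lia.
  - simpl in Hlen. lia.
  - intros t Ht. apply Hproc; right; auto.
  - apply StronglySorted_inv in Hsorted; tauto.
  - intros t [ -> |[Ht Hne]]%Mn; [rewrite upd_same; lia|].
    rewrite Eo by auto. specialize (Hpproc t Ht); simpl in Hpproc; lia.
  - intros t1 t2 [ -> |[H1 N1]]%Mn [ -> |[H2 N2]]%Mn; auto.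
    + rewrite upd_same, Eo by auto. intros E. specialize (Hpproc t2 H2); simpl in Hpproc; lia.
    + rewrite upd_same, Eo by auto. intros E. specialize (Hpproc t1 H1); simpl in Hpproc; lia.
    + rewrite !Eo by auto. apply Hpinj; auto.
  - discriminate.
  - destruct (arc_of_red_left r b (upd p t0 j) t0) as [Hl1 Hl2]; [rewrite upd_same; auto|].
    rewrite upd_same in Hl2.
    intros t1 t2 [ -> |[H1 N1]]%Mn [ -> |[H2 N2]]%Mn Hne Hc; [lia| | |].
    + unfold arcs_cross in Hc. rewrite (arc_hi_ext r b _ p t2) in Hc by (apply Eo; auto).
      specialize (Hhi t2 H2). lra.
    + unfold arcs_cross in Hc.
      rewrite (arc_hi_ext r b _ p t1), (arc_lo_ext r b _ p t1) in Hc by (apply Eo; auto).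
      apply (Hunc t1 t0); [auto|left; auto|]. simpl. lra.
    + apply (Hnc t1 t2); auto. revert Hc; apply arcs_cross_ext; apply Eo; auto.
  - intros t u [ -> |[Ht Ne]]%Mn Hu Hc; simpl in Hc.
    + destruct (arc_of_red_left r b (upd p t0 j) t0) as [E1 E2]; [rewrite upd_same; auto|].
      rewrite E1 in Hc. pose proof (stack_below_top _ _ _ Hsorted Hu).
      assert (r u < r t0) by (apply (red_lt n r b Hinput); lia). lra.
    + rewrite (arc_hi_ext r b _ p t), (arc_lo_ext r b _ p t) in Hc by (apply Eo; auto).
      apply (Hunc t u); [auto|right; auto|auto].
Qed.

Lemma sweep_inv_blue_push i j st blue p :
  sweep_inv n r b (SweepState i j st blue p) -> (j < n)%nat ->
  (i = n \/ b j < r i) -> (st = [] \/ blue = true) ->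
  sweep_inv n r b (SweepState i (S j) (j :: st) true p).
Proof.
  intros [Hnr Hnb Hrb Hbr Hlen Hproc Hsorted Hpproc Hpinj Hunst Hnc Hunc] Hj Hnext Hst; simpl in *.
  assert (Mf : forall t, red_matched (SweepState i (S j) (j :: st) true p) t <->
                        red_matched (SweepState i j st blue p) t).
  { intros t; unfold red_matched; simpl. destruct Hst as [ -> | -> ]; simpl; intuition discriminate. }
  assert (Hsti : forall u, In u st -> blue = true /\ (u < j)%nat).
  { intros u Hu. destruct Hst as [ -> | -> ]; [destruct Hu|]. split; [auto|apply (Hproc u Hu)]. }
  constructor; cbn [next_red next_blue stack stack_blue partner].
  - lia.
  - lia.
  - intros i' j' Hi' Hj'. apply Hrb; lia.
  - intros i' j' Hj' Hi'. destruct (Nat.eq_dec j' j); [subst|apply Hbr; lia].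
    destruct Hnext as [Hnext|Hnext]; [lia|].
    eapply Rlt_le_trans; [apply Hnext|]. apply (red_le n r b Hinput); lia.
  - destruct blue; [cbn [length] in Hlen |- *; lia|].
    destruct Hst as [ -> |]; [cbn [length] in *; lia|discriminate].
  - intros t [ <- |Ht]; [lia|]. apply Hsti in Ht; lia.
  - constructor; auto. rewrite Forall_forall. intros u Hu. apply Hsti in Hu; lia.
  - intros t Ht%Mf. specialize (Hpproc t Ht); simpl in Hpproc; lia.
  - intros t1 t2 H1%Mf H2%Mf. apply Hpinj; auto.
  - intros _ t Ht%Mf [E|Hu]; [specialize (Hpproc t Ht); simpl in Hpproc; lia|].
    destruct (Hsti _ Hu) as [-> _]. apply (Hunst eq_refl t Ht Hu).
  - intros t1 t2 H1%Mf H2%Mf. apply Hnc; auto.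
  - intros t u Ht%Mf [ <- |Hu] Hc; simpl in Hc.
    + assert (arc_hi r b p t < b j); [|lra].
      apply arc_hi_lt; [apply Hrb; [apply Ht|lia]|].
      specialize (Hpproc t Ht). simpl in Hpproc. apply (blue_lt n r b Hinput); lia.
    + destruct (Hsti u Hu) as [Hc0 _]. subst blue. apply (Hunc t u); auto.
Qed.

Lemma Rabs_le_between x y : Rabs x <= y <-> -y <= x <= y.
Proof. unfold Rabs; destruct (Rcase_abs x); split; intros; lra. Qed.

Lemma potentials_red i j st blue p a v pR pB :
  sweep_inv n r b (SweepState i j st blue p) ->
  potentials n r b (SweepState i j st blue p) a v pR pB -> (i < n)%nat ->
  (j = n \/ r i < b j) ->
  exists a' v' pR' pB', potentials n r b (sweep_red (SweepState i j st blue p)) a' v' pR' pB'.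
Proof.
  intros HI [P1 P2 P3 P4 P5 P6 P7] Hi Hnext; cbn [next_red next_blue stack stack_blue partner] in *.
  assert (Ha : a <= r i) by (apply P1; lia).
  (* The sweep line moves to [r i]; the level moves by the same distance towards
     the stacked points, so that they stay tight. *)
  set (v' := if blue then v + (r i - a) else v - (r i - a)).
  assert (Hv' : - (r i - a) <= v' - v <= r i - a) by (unfold v'; destruct blue; lra).
  exists (r i), v', (upd pR i v'), pB.
  assert (ER : forall t, (t < i)%nat -> upd pR i v' t = pR t) by (intros; apply upd_other; lia).
  assert (Hred : forall i', (S i <= i' < n)%nat -> r i <= r i')
    by (intros; apply (red_le n r b Hinput); lia).
  assert (Hblue : forall j', (j <= j' < n)%nat -> r i <= b j').
  { intros j' Hj'. destruct Hnext as [Hnext|Hnext]; [lia|].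
    left. eapply Rlt_le_trans; [apply Hnext|]. apply (blue_le n r b Hinput); lia. }
  assert (Hnear : forall i', (i' < S i)%nat -> Rabs (v' - upd pR i v' i') <= r i - r i').
  { intros i' Hi'. destruct (Nat.eq_dec i' i) as [ -> |]; [rewrite upd_same; apply Rabs_le_between; lra|].
    rewrite ER by lia. specialize (P3 i' ltac:(lia)). apply Rabs_le_between in P3.
    apply Rabs_le_between; lra. }
  assert (Hnear' : forall j', (j' < j)%nat -> Rabs (v' - pB j') <= r i - b j').
  { intros j' Hj'. specialize (P4 j' Hj'). apply Rabs_le_between in P4. apply Rabs_le_between; lra. }
  assert (Hfeas : forall i' j', (i' < S i)%nat -> (j' < j)%nat ->
                    upd pR i v' i' - pB j' <= Rabs (r i' - b j')).
  { intros i' j' Hi' Hj'. destruct (Nat.eq_dec i' i) as [ -> |]; [|rewrite ER by lia; apply P5; lia].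
    rewrite upd_same. specialize (Hnear' j' Hj'). apply Rabs_le_between in Hnear'.
    apply Rle_trans with (r i - b j'); [lra|apply Rle_abs]. }
  assert (Hpush : st = [] \/ blue = false ->
    potentials n r b (SweepState (S i) j (i :: st) false p) (r i) v' (upd pR i v') pB).
  { intros Hst. constructor; cbn [stack stack_blue next_red next_blue partner]; auto.
    - intros u [ <- |Hu]; [rewrite upd_same; lra|].
      destruct Hst as [ -> | -> ]; [destruct Hu|].
      pose proof (HI.(inv_stack_processed _ _ _ _) u Hu). cbn in *.
      specialize (P6 u Hu). rewrite ER by lia. unfold v'. lra.
    - intros t Ht. destruct (red_matched_red_push i j st blue p t Ht) as [Ht' Hti].
      rewrite ER by lia. auto. }
  unfold sweep_red; cbn [stack stack_blue next_red next_blue partner].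
  destruct st as [|t0 rest]; [auto|destruct blue; [|auto]].
  pose proof (HI.(inv_stack_processed _ _ _ _) t0 (or_introl eq_refl)) as Ht0. cbn in Ht0.
  assert (Hb0 : b t0 < r i) by (apply (HI.(inv_blue_before _ _ _ _)); cbn; lia).
  constructor; cbn [stack stack_blue next_red next_blue partner]; auto.
  - intros u Hu. specialize (P6 u (or_intror Hu)). unfold v'. lra.
  - intros t Ht. rewrite red_matched_all in Ht by reflexivity. cbn in Ht.
    destruct (Nat.eq_dec t i) as [ -> |].
    + rewrite !upd_same. specialize (P6 t0 (or_introl eq_refl)).
      rewrite Rabs_right by lra. unfold v'. lra.
    + rewrite ER, upd_other by lia. apply P7. rewrite red_matched_all by reflexivity. cbn; lia.
Qed.

Lemma potentials_blue i j st blue p a v pR pB :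
  sweep_inv n r b (SweepState i j st blue p) ->
  potentials n r b (SweepState i j st blue p) a v pR pB -> (j < n)%nat ->
  (i = n \/ b j < r i) ->
  exists a' v' pR' pB', potentials n r b (sweep_blue (SweepState i j st blue p)) a' v' pR' pB'.
Proof.
  intros HI [P1 P2 P3 P4 P5 P6 P7] Hj Hnext; cbn [next_red next_blue stack stack_blue partner] in *.
  assert (Ha : a <= b j) by (apply P2; lia).
  set (v' := if blue then v + (b j - a) else v - (b j - a)).
  assert (Hv' : - (b j - a) <= v' - v <= b j - a) by (unfold v'; destruct blue; lra).
  exists (b j), v', pR, (upd pB j v').
  assert (EB : forall t, (t < j)%nat -> upd pB j v' t = pB t) by (intros; apply upd_other; lia).
  assert (Hred : forall i', (i <= i' < n)%nat -> b j <= r i').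
  { intros i' Hi'. destruct Hnext as [Hnext|Hnext]; [lia|].
    left. eapply Rlt_le_trans; [apply Hnext|]. apply (red_le n r b Hinput); lia. }
  assert (Hblue : forall j', (S j <= j' < n)%nat -> b j <= b j')
    by (intros; apply (blue_le n r b Hinput); lia).
  assert (Hnear : forall i', (i' < i)%nat -> Rabs (v' - pR i') <= b j - r i').
  { intros i' Hi'. specialize (P3 i' Hi'). apply Rabs_le_between in P3. apply Rabs_le_between; lra. }
  assert (Hnear' : forall j', (j' < S j)%nat -> Rabs (v' - upd pB j v' j') <= b j - b j').
  { intros j' Hj'. destruct (Nat.eq_dec j' j) as [ -> |]; [rewrite upd_same; apply Rabs_le_between; lra|].
    rewrite EB by lia. specialize (P4 j' ltac:(lia)). apply Rabs_le_between in P4.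
    apply Rabs_le_between; lra. }
  assert (Hfeas : forall i' j', (i' < i)%nat -> (j' < S j)%nat ->
                    pR i' - upd pB j v' j' <= Rabs (r i' - b j')).
  { intros i' j' Hi' Hj'. destruct (Nat.eq_dec j' j) as [ -> |]; [|rewrite EB by lia; apply P5; lia].
    rewrite upd_same, Rabs_minus_sym. specialize (Hnear i' Hi'). apply Rabs_le_between in Hnear.
    apply Rle_trans with (b j - r i'); [lra|apply Rle_abs]. }
  assert (Hpartner : forall t, red_matched (SweepState i j st blue p) t -> upd pB j v' (p t) = pB (p t))
    by (intros t Ht; apply EB, (HI.(inv_partner_processed _ _ _ _) t Ht)).
  assert (Hpush : st = [] \/ blue = true ->
    potentials n r b (SweepState i (S j) (j :: st) true p) (b j) v' pR (upd pB j v')).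
  { intros Hst. constructor; cbn [stack stack_blue next_red next_blue partner]; auto.
    - intros u [ <- |Hu]; [rewrite upd_same; lra|].
      destruct Hst as [ -> | -> ]; [destruct Hu|].
      pose proof (HI.(inv_stack_processed _ _ _ _) u Hu). cbn in *.
      specialize (P6 u Hu). rewrite EB by lia. unfold v'. lra.
    - intros t Ht. rewrite red_matched_all in Ht by reflexivity. cbn in Ht.
      assert (Ht' : red_matched (SweepState i j st blue p) t).
      { split; [cbn; lia|]. cbn. destruct Hst as [ -> | -> ]; [tauto|intuition discriminate]. }
      rewrite Hpartner by auto. auto. }
  unfold sweep_blue; cbn [stack stack_blue next_red next_blue partner].
  destruct st as [|t0 rest]; [auto|destruct blue; [auto|]].
  pose proof (HI.(inv_stack_processed _ _ _ _) t0 (or_introl eq_refl)) as Ht0. cbn in Ht0.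
  assert (Hr0 : r t0 < b j) by (apply (HI.(inv_red_before _ _ _ _)); cbn; lia).
  constructor; cbn [stack stack_blue next_red next_blue partner]; auto.
  - intros u Hu. specialize (P6 u (or_intror Hu)). unfold v'. lra.
  - intros t [ -> |[Ht Hne]]%red_matched_blue_pop.
    + rewrite !upd_same. specialize (P6 t0 (or_introl eq_refl)).
      rewrite Rabs_left by lra. unfold v'. lra.
    + rewrite (upd_other p), Hpartner by auto. auto.
Qed.

Lemma sweep_ok_start : sweep_ok n r b sweep_start.
Proof.
  assert (Hnone : forall t, ~ red_matched sweep_start t) by (intros t [Ht _]; cbn in Ht; lia).
  split.
  - constructor; cbn [next_red next_blue stack stack_blue partner sweep_start].
    all: try (intros; lia); try discriminate.
    + cbn; lia.
    + intros ? [].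
    + constructor.
    + intros t Ht; destruct (Hnone t Ht).
    + intros t1 t2 Ht; destruct (Hnone t1 Ht).
    + intros t1 t2 Ht; destruct (Hnone t1 Ht).
    + intros t u Ht; destruct (Hnone t Ht).
  - exists (Rmin (r 0%nat) (b 0%nat)), 0, (fun _ => 0), (fun _ => 0).
    constructor; cbn [next_red next_blue stack stack_blue partner sweep_start]; try (intros; lia).
    + intros i Hi. eapply Rle_trans; [apply Rmin_l|]. apply (red_le n r b Hinput); lia.
    + intros j Hj. eapply Rle_trans; [apply Rmin_r|]. apply (blue_le n r b Hinput); lia.
    + intros ? [].
    + intros t Ht; destruct (Hnone t Ht).
Qed.

Lemma sweep_step_count s :
  (next_red (sweep_step n r b s) + next_blue (sweep_step n r b s) = S (next_red s + next_blue s))%nat.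
Proof.
  unfold sweep_step, sweep_red, sweep_blue.
  destruct (red_comes_next n r b s), (stack s), (stack_blue s); cbn; lia.
Qed.

Lemma sweep_ok_step s :
  sweep_ok n r b s -> (next_red s + next_blue s < n + n)%nat -> sweep_ok n r b (sweep_step n r b s).
Proof.
  destruct s as [i j st blue p]; intros [HI (a & v & pR & pB & HP)] Hlt.
  pose proof (inv_next_red _ _ _ _ HI) as Hi. pose proof (inv_next_blue _ _ _ _ HI) as Hj.
  cbn in Hi, Hj, Hlt.
  assert (Hred : (i < n)%nat -> (j = n \/ r i < b j) -> sweep_ok n r b (sweep_red (SweepState i j st blue p))).
  { intros Hi' Hnext. split; [|eapply potentials_red; eauto].
    unfold sweep_red; cbn. destruct st as [|t l]; [eapply sweep_inv_red_push; eauto|].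
    destruct blue; [apply sweep_inv_red_pop; auto|eapply sweep_inv_red_push; eauto]. }
  assert (Hblue : (j < n)%nat -> (i = n \/ b j < r i) -> sweep_ok n r b (sweep_blue (SweepState i j st blue p))).
  { intros Hj' Hnext. split; [|eapply potentials_blue; eauto].
    unfold sweep_blue; cbn. destruct st as [|t l]; [eapply sweep_inv_blue_push; eauto|].
    destruct blue; [eapply sweep_inv_blue_push; eauto|apply sweep_inv_blue_pop; auto]. }
  unfold sweep_step, red_comes_next; cbn [next_red next_blue].
  destruct (Nat.ltb_spec i n); cbn [andb]; [|apply Hblue; lia].
  destruct (Nat.eqb_spec j n); cbn [orb]; [apply Hred; auto|].
  destruct (Rlt_dec (r i) (b j)) as [|Hge]; [apply Hred; auto|].
  apply Hblue; [lia|right].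
  assert (r i <> b j) by (apply (red_neq_blue n r b Hinput); lia).
  apply Rnot_lt_le in Hge. destruct Hge; [assumption|congruence].
Qed.

Lemma sweep_ok_iter k s :
  sweep_ok n r b s -> (next_red s + next_blue s + k <= n + n)%nat ->
  sweep_ok n r b (Nat.iter k (sweep_step n r b) s) /\
  (next_red (Nat.iter k (sweep_step n r b) s) + next_blue (Nat.iter k (sweep_step n r b) s)
   = next_red s + next_blue s + k)%nat.
Proof.
  revert s; induction k as [|k IH]; intros s Hs Hk; [cbn; split; auto; lia|].
  rewrite Nat.iter_succ_r. pose proof (sweep_step_count s).
  destruct (IH (sweep_step n r b s)) as [H1 H2]; [apply sweep_ok_step; auto; lia|lia|].
  split; auto; lia.
Qed.

Lemma sweep_ok_final s :
  sweep_ok n r b s -> next_red s = n -> next_blue s = n ->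
  stack s = [] /\ is_min_nc_matching n r b (partner s).
Proof.
  intros [HI (a & v & pR & pB & HP)] Ei Ej.
  assert (Hst : stack s = []).
  { pose proof (inv_stack_length _ _ _ _ HI) as Hl.
    destruct (stack s); auto. destruct (stack_blue s); cbn in Hl; lia. }
  assert (M : forall t, (t < n)%nat -> red_matched s t)
    by (intros t Ht; split; [lia|rewrite Hst; cbn; tauto]).
  assert (Hbij : is_bichromatic_perfect_matching n (partner s)).
  { split; [intros; rewrite <- Ej; apply (inv_partner_processed _ _ _ _ HI), M; auto|].
    intros; apply (inv_partner_inj _ _ _ _ HI); auto. }
  split; [auto|split; [split; [auto|]|]].
  - intros t1 t2 H1 H2 Hne. apply (inv_non_crossing _ _ _ _ HI); auto.
  - intros g [Hg _]. unfold weight.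
    apply (assignment_weak_duality n (fun i j => Rabs (r i - b j)) pR pB); auto.
    + intros i j Hi Hj. apply (pot_feasible _ _ _ _ _ _ _ _ HP); lia.
    + intros i Hi. apply (pot_matched_tight _ _ _ _ _ _ _ _ HP), M; auto.
Qed.

Theorem sweep_correct :
  exists blue p, sweep n r b = SweepState n n [] blue p /\ is_min_nc_matching n r b p.
Proof.
  destruct (sweep_ok_iter (n + n) sweep_start sweep_ok_start) as [Hok Hcount]; [cbn; lia|].
  fold (sweep n r b) in Hok, Hcount. cbn in Hcount.
  pose proof (inv_next_red _ _ _ _ (proj1 Hok)). pose proof (inv_next_blue _ _ _ _ (proj1 Hok)).
  destruct (sweep_ok_final (sweep n r b) Hok) as [Hst Hmin]; [lia|lia|].
  destruct (sweep n r b) as [i j st blue p]; cbn in *.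
  exists blue, p. split; [f_equal; auto; lia|exact Hmin].
Qed.

End Sweep.

(** * The program *)

(* Registers: Z[0] = n, Z[1] = 1, Z[2] = 0; during the sweep Z[3] = i and Z[4] = j
   (next red and blue point), Z[8] and Z[9] the addresses of r i and b j in the copy
   Rm[2n .. 4n) of the input (Rm[0] and Rm[1] are the comparison registers), the
   stack grows upwards from Z[6] = n + 27 with top Z[5] and colour Z[7] (1 = blue),
   Z[12] = n + 14, Z[13] = 13, and Z[10], Z[11] are scratch.  The partner of red t
   goes to Z[t + 1], except that for t < 13 that cell is a register: the partner is
   parked in Z[n + 14 + t] until lines 72-99 move it.  Lines 0-10 copy the input,
   11-21 initialise, 22-28 choose the colour of the next point, 29-50 process a
   blue point and 51-71 a red one. *)
Open Scope Z_scope.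
Definition matching_prog : list instr := [
  (* 0 *) ZConst 1 1;
  (* 1 *) ZConst 2 0;
  (* 2 *) ZConst 3 0;
  (* 3 *) ZAdd 4 0 0;
  (* 4 *) ZAdd 8 4 2;
  (* 5 *) JZEq 3 4 11;
  (* 6 *) RLoadInd 0 3;
  (* 7 *) RStoreInd 8 0;
  (* 8 *) ZAdd 3 3 1;
  (* 9 *) ZAdd 8 8 1;
  (* 10 *) Jmp 5;
  (* 11 *) ZConst 3 0;
  (* 12 *) ZConst 4 0;
  (* 13 *) ZConst 10 27;
  (* 14 *) ZAdd 6 0 10;
  (* 15 *) ZAdd 5 6 2;
  (* 16 *) ZConst 7 0;
  (* 17 *) ZAdd 8 0 0;
  (* 18 *) ZAdd 9 8 0;
  (* 19 *) ZConst 10 14;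
  (* 20 *) ZAdd 12 0 10;
  (* 21 *) ZConst 13 13;
  (* 22 *) JZEq 3 0 28;
  (* 23 *) JZEq 4 0 51;
  (* 24 *) RLoadInd 0 8;
  (* 25 *) RLoadInd 1 9;
  (* 26 *) JRLt 0 1 51;
  (* 27 *) Jmp 29;
  (* 28 *) JZEq 4 0 72;
  (* 29 *) JZEq 5 6 43;
  (* 30 *) JZEq 7 2 32;
  (* 31 *) Jmp 43;
  (* 32 *) ZSub 5 5 1;
  (* 33 *) ZLoadInd 10 5;
  (* 34 *) JZLt 10 13 37;
  (* 35 *) ZAdd 11 10 1;
  (* 36 *) Jmp 38;
  (* 37 *) ZAdd 11 10 12;
  (* 38 *) ZAdd 10 4 2;
  (* 39 *) ZAdd 4 4 1;
  (* 40 *) ZAdd 9 9 1;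
  (* 41 *) ZStoreInd 11 10;
  (* 42 *) Jmp 22;
  (* 43 *) ZAdd 11 5 2;
  (* 44 *) ZAdd 10 4 2;
  (* 45 *) ZAdd 5 5 1;
  (* 46 *) ZConst 7 1;
  (* 47 *) ZAdd 4 4 1;
  (* 48 *) ZAdd 9 9 1;
  (* 49 *) ZStoreInd 11 10;
  (* 50 *) Jmp 22;
  (* 51 *) JZEq 5 6 64;
  (* 52 *) JZEq 7 1 54;
  (* 53 *) Jmp 64;
  (* 54 *) ZSub 5 5 1;
  (* 55 *) ZLoadInd 10 5;
  (* 56 *) JZLt 3 13 59;
  (* 57 *) ZAdd 11 3 1;
  (* 58 *) Jmp 60;
  (* 59 *) ZAdd 11 3 12;
  (* 60 *) ZAdd 3 3 1;
  (* 61 *) ZAdd 8 8 1;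
  (* 62 *) ZStoreInd 11 10;
  (* 63 *) Jmp 22;
  (* 64 *) ZAdd 11 5 2;
  (* 65 *) ZAdd 10 3 2;
  (* 66 *) ZAdd 5 5 1;
  (* 67 *) ZConst 7 0;
  (* 68 *) ZAdd 3 3 1;
  (* 69 *) ZAdd 8 8 1;
  (* 70 *) ZStoreInd 11 10;
  (* 71 *) Jmp 22;
  (* 72 *) ZConst 10 12;
  (* 73 *) ZAdd 0 12 10;
  (* 74 *) ZLoadInd 13 0;
  (* 75 *) ZSub 0 0 1;
  (* 76 *) ZLoadInd 12 0;
  (* 77 *) ZSub 0 0 1;
  (* 78 *) ZLoadInd 11 0;
  (* 79 *) ZSub 0 0 1;
  (* 80 *) ZLoadInd 10 0;
  (* 81 *) ZSub 0 0 1;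
  (* 82 *) ZLoadInd 9 0;
  (* 83 *) ZSub 0 0 1;
  (* 84 *) ZLoadInd 8 0;
  (* 85 *) ZSub 0 0 1;
  (* 86 *) ZLoadInd 7 0;
  (* 87 *) ZSub 0 0 1;
  (* 88 *) ZLoadInd 6 0;
  (* 89 *) ZSub 0 0 1;
  (* 90 *) ZLoadInd 5 0;
  (* 91 *) ZSub 0 0 1;
  (* 92 *) ZLoadInd 4 0;
  (* 93 *) ZSub 0 0 1;
  (* 94 *) ZLoadInd 3 0;
  (* 95 *) ZSub 0 0 1;
  (* 96 *) ZLoadInd 2 0;
  (* 97 *) ZSub 0 0 1;
  (* 98 *) ZLoadInd 1 0;
  (* 99 *) Halt ].

Open Scope nat_scope.

Fixpoint run_steps (k : nat) (s : state) : option state :=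
  match k with
  | O => Some s
  | S k' => match step matching_prog s with Some s' => run_steps k' s' | None => None end
  end.

Lemma run_steps_add k1 k2 s s1 s2 :
  run_steps k1 s = Some s1 -> run_steps k2 s1 = Some s2 -> run_steps (k1 + k2) s = Some s2.
Proof.
  revert s; induction k1 as [|k1 IH]; cbn; intros s H1 H2; [congruence|].
  destruct (step matching_prog s); [eauto|discriminate].
Qed.

Lemma exec_of_run_steps k f s s' :
  run_steps k s = Some s' -> step matching_prog s' = None -> k <= f -> exec matching_prog f s = Some s'.
Proof.
  revert s f; induction k as [|k IH]; cbn; intros s f H1 H2 Hk.
  - injection H1 as ->. destruct f; cbn; rewrite H2; reflexivity.
  - destruct (step matching_prog s) eqn:E; [|discriminate].
    destruct f; [lia|]. cbn. rewrite E. apply IH; auto; lia.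
Qed.

Ltac decide_tests :=
  repeat match goal with
  | |- context [Nat.eqb ?a ?b] =>
      first [ replace (Nat.eqb a b) with false by (symmetry; apply Nat.eqb_neq; lia)
            | replace (Nat.eqb a b) with true by (symmetry; apply Nat.eqb_eq; lia) ]
  | |- context [Nat.ltb ?a ?b] =>
      first [ replace (Nat.ltb a b) with false by (symmetry; apply Nat.ltb_ge; lia)
            | replace (Nat.ltb a b) with true by (symmetry; apply Nat.ltb_lt; lia) ]
  | |- context [Z.eqb ?a ?b] =>
      first [ replace (Z.eqb a b) with false by (symmetry; apply Z.eqb_neq; lia)
            | replace (Z.eqb a b) with true by (symmetry; apply Z.eqb_eq; lia) ]
  | |- context [Z.ltb ?a ?b] =>
      first [ replace (Z.ltb a b) with false by (symmetry; apply Z.ltb_ge; lia)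
            | replace (Z.ltb a b) with true by (symmetry; apply Z.ltb_lt; lia) ]
  | |- context [Rlt_dec ?x ?y] =>
      first [ destruct (Rlt_dec x y) as [_|Hge]; [|exfalso; lra]
            | destruct (Rlt_dec x y) as [Hlt|_]; [exfalso; lra|] ]
  | |- context [Z.to_nat (Z.of_nat ?a)] => rewrite (Nat2Z.id a)
  end.

Ltac simpl_upd :=
  repeat match goal with
  | |- context [upd ?f ?a ?v ?x] =>
      first [ rewrite (upd_eq f a v x) by reflexivity
            | rewrite (upd_other f a v x) by (intro; discriminate)
            | rewrite (upd_eq f a v x) by lia | rewrite (upd_other f a v x) by lia ]
  end.

Lemma run_steps_step k s s' :
  step matching_prog s = Some s' -> run_steps (S k) s = run_steps k s'.
Proof. intros H; cbn; rewrite H; reflexivity. Qed.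

(* Execution is symbolic, one instruction at a time: memory is a stack of [upd]s
   over the initial memory, and reads and tests are resolved from the known
   register contents, which the tactic [regs] rewrites with. *)
Ltac settle regs :=
  simpl_upd; regs; cbn [length stack next_red next_blue stack_blue partner]; decide_tests.
Ltac run regs :=
  repeat (erewrite run_steps_step
            by (lazy beta iota zeta delta [step nth_error matching_prog pc zm rm];
                settle regs; reflexivity));
  reflexivity.

Definition input_cell (n : nat) (r b : nat -> R) (a : nat) : R :=
  if Nat.ltb a n then r a else if Nat.ltb a (n + n) then b (a - n) else 0%R.

Record copy_inv n (r b : nat -> R) (k : nat) (z : nat -> Z) (m : nat -> R) : Prop := {
  copy_n : z 0 = Z.of_nat n; copy_one : z 1 = 1%Z; copy_zero : z 2 = 0%Z;
  copy_k : z 3 = Z.of_nat k; copy_end : z 4 = Z.of_nat (n + n); copy_dst : z 8 = Z.of_nat (n + n + k);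
  copy_k_le : k <= n + n;
  copy_done : forall a, a < k -> m (n + n + a) = input_cell n r b a;
  copy_todo : forall a, k <= a < n + n -> m a = input_cell n r b a }.

Ltac copy_regs HM :=
  repeat first [ rewrite (copy_n _ _ _ _ _ _ HM) | rewrite (copy_one _ _ _ _ _ _ HM)
  | rewrite (copy_zero _ _ _ _ _ _ HM) | rewrite (copy_k _ _ _ _ _ _ HM)
  | rewrite (copy_end _ _ _ _ _ _ HM) | rewrite (copy_dst _ _ _ _ _ _ HM) ].

Lemma copy_start n r b :
  exists z m, run_steps 5 (init_state n r b) = Some (mkState 5 z m) /\ copy_inv n r b 0 z m.
Proof.
  do 2 eexists. split; [run idtac|].
  constructor; cbn; decide_tests; try lia. intros a Ha. reflexivity.
Qed.

Lemma copy_step n r b k z m : copy_inv n r b k z m -> k < n + n ->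
  exists z' m', run_steps 6 (mkState 5 z m) = Some (mkState 5 z' m') /\ copy_inv n r b (S k) z' m'.
Proof.
  intros HM Hk. do 2 eexists. split; [run ltac:(copy_regs HM)|].
  constructor; settle ltac:(copy_regs HM); try lia.
  - intros a Ha. destruct (Nat.eq_dec a k) as [ -> |].
    + simpl_upd. apply (copy_todo _ _ _ _ _ _ HM); lia.
    + simpl_upd. apply (copy_done _ _ _ _ _ _ HM); lia.
  - intros a Ha. simpl_upd. apply (copy_todo _ _ _ _ _ _ HM); lia.
Qed.

Lemma copy_loop n r b d k z m : d = n + n - k -> copy_inv n r b k z m ->
  exists z' m', run_steps (6 * d + 1) (mkState 5 z m) = Some (mkState 11 z' m') /\
                copy_inv n r b (n + n) z' m'.
Proof.
  revert k z m; induction d as [|d IH]; intros k z m Hd HM;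
    pose proof (copy_k_le _ _ _ _ _ _ HM).
  - assert (k = n + n) by lia. subst k.
    exists z, m. change (6 * 0 + 1) with 1. split; [run ltac:(copy_regs HM)|auto].
  - destruct (copy_step n r b k z m HM ltac:(lia)) as (z1 & m1 & H1 & H2).
    destruct (IH (S k) z1 m1 ltac:(lia) H2) as (z' & m' & H3 & H4).
    exists z', m'. split; auto. replace (6 * S d + 1) with (6 + (6 * d + 1)) by lia.
    eapply run_steps_add; eauto.
Qed.

Definition partner_cell (n t : nat) : nat := if Nat.ltb t 13 then n + 14 + t else S t.

Lemma partner_cell_bounds n t : t < n -> 14 <= partner_cell n t <= n + 26.
Proof. unfold partner_cell. destruct (Nat.ltb_spec t 13); lia. Qed.

Lemma partner_cell_inj n t1 t2 : t1 < n -> t2 < n -> t1 <> t2 -> partner_cell n t1 <> partner_cell n t2.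
Proof. unfold partner_cell. destruct (Nat.ltb_spec t1 13), (Nat.ltb_spec t2 13); lia. Qed.

Lemma partner_cell_small n t : t < 13 -> Z.to_nat (Z.of_nat t + Z.of_nat (n + 14)) = partner_cell n t.
Proof. unfold partner_cell. destruct (Nat.ltb_spec t 13); lia. Qed.

Lemma partner_cell_large n t : 13 <= t -> Z.to_nat (Z.of_nat t + 1) = partner_cell n t.
Proof. unfold partner_cell. destruct (Nat.ltb_spec t 13); lia. Qed.

Lemma nth_rev_cons_last (l : list nat) x : nth (length l) (rev (x :: l)) 0 = x.
Proof. cbn. rewrite app_nth2; rewrite length_rev; [|lia]. rewrite Nat.sub_diag; reflexivity. Qed.

Lemma nth_rev_cons_lt (l : list nat) x d : d < length l -> nth d (rev (x :: l)) 0 = nth d (rev l) 0.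
Proof. intros; cbn. rewrite app_nth1; [reflexivity|]. rewrite length_rev; assumption. Qed.

Record sweep_rep n (r b : nat -> R) (s : sweep_state) (z : nat -> Z) (m : nat -> R) : Prop := {
  rep_n : z 0 = Z.of_nat n; rep_one : z 1 = 1%Z; rep_zero : z 2 = 0%Z;
  rep_red : z 3 = Z.of_nat (next_red s); rep_blue : z 4 = Z.of_nat (next_blue s);
  rep_top : z 5 = Z.of_nat (n + 27 + length (stack s)); rep_base : z 6 = Z.of_nat (n + 27);
  rep_colour : z 7 = (if stack_blue s then 1 else 0)%Z;
  rep_red_addr : z 8 = Z.of_nat (n + n + next_red s);
  rep_blue_addr : z 9 = Z.of_nat (n + n + n + next_blue s);
  rep_partner_base : z 12 = Z.of_nat (n + 14); rep_thirteen : z 13 = 13%Z;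
  rep_stack : forall d, d < length (stack s) -> z (n + 27 + d) = Z.of_nat (nth d (rev (stack s)) 0);
  rep_partner : forall t, red_matched s t -> z (partner_cell n t) = Z.of_nat (partner s t);
  rep_input : forall a, a < n + n -> m (n + n + a) = input_cell n r b a }.

Ltac rep_regs HM :=
  repeat first [ rewrite (rep_n _ _ _ _ _ _ HM) | rewrite (rep_one _ _ _ _ _ _ HM)
  | rewrite (rep_zero _ _ _ _ _ _ HM) | rewrite (rep_red _ _ _ _ _ _ HM)
  | rewrite (rep_blue _ _ _ _ _ _ HM) | rewrite (rep_top _ _ _ _ _ _ HM)
  | rewrite (rep_base _ _ _ _ _ _ HM) | rewrite (rep_colour _ _ _ _ _ _ HM)
  | rewrite (rep_red_addr _ _ _ _ _ _ HM) | rewrite (rep_blue_addr _ _ _ _ _ _ HM)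
  | rewrite (rep_partner_base _ _ _ _ _ _ HM) | rewrite (rep_thirteen _ _ _ _ _ _ HM) ].

Lemma sweep_setup n r b z m : copy_inv n r b (n + n) z m ->
  exists z' m', run_steps 11 (mkState 11 z m) = Some (mkState 22 z' m') /\
                sweep_rep n r b sweep_start z' m'.
Proof.
  intros HM. do 2 eexists. split; [run ltac:(copy_regs HM)|].
  unfold sweep_start; constructor; settle ltac:(copy_regs HM); try lia.
  - intros t [Ht _]; cbn in Ht; lia.
  - intros a Ha. apply (copy_done _ _ _ _ _ _ HM); lia.
Qed.

Section Simulation.

Variables (n : nat) (r b : nat -> R).

Lemma stack_fits i j st blue p :
  sweep_inv n r b (SweepState i j st blue p) -> length st <= n.
Proof.
  intros HI. pose proof (inv_stack_length _ _ _ _ HI). pose proof (inv_next_red _ _ _ _ HI).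
  pose proof (inv_next_blue _ _ _ _ HI). cbn in *. destruct blue; lia.
Qed.

Lemma red_push_sim i j st blue p z m :
  sweep_inv n r b (SweepState i j st blue p) -> sweep_rep n r b (SweepState i j st blue p) z m ->
  i < n -> (st = [] \/ blue = false) ->
  exists k z' m', k <= 12 /\ run_steps k (mkState 51 z m) = Some (mkState 22 z' m') /\
    sweep_rep n r b (SweepState (S i) j (i :: st) false p) z' m'.
Proof.
  intros HI HM Hi Hst. pose proof (stack_fits _ _ _ _ _ HI) as Hlen.
  destruct st as [|t0 rest]; [exists 9|destruct blue; [destruct Hst; discriminate|exists 11]];
  do 2 eexists; (split; [lia|split; [run ltac:(rep_regs HM)|]]);
  (constructor; cbn [next_red next_blue stack stack_blue partner length];
   [ settle ltac:(rep_regs HM); lia .. | | | apply (rep_input _ _ _ _ _ _ HM) ]).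
  - intros d Hd. assert (d = 0) by lia. subst d. settle ltac:(rep_regs HM). cbn. lia.
  - intros t Ht. destruct (red_matched_red_push _ _ _ blue _ _ Ht) as [Ht' Hti].
    pose proof (partner_cell_bounds n t ltac:(lia)).
    settle ltac:(rep_regs HM). apply (rep_partner _ _ _ _ _ _ HM); auto.
  - intros d Hd. cbn in Hlen. destruct (Nat.eq_dec d (S (length rest))) as [ -> |Hne].
    + settle ltac:(rep_regs HM). change (S (length rest)) with (length (t0 :: rest)).
      rewrite nth_rev_cons_last. lia.
    + settle ltac:(rep_regs HM). rewrite nth_rev_cons_lt by (cbn; lia).
      apply (rep_stack _ _ _ _ _ _ HM). cbn; lia.
  - intros t Ht. destruct (red_matched_red_push _ _ _ false _ _ Ht) as [Ht' Hti].
    pose proof (partner_cell_bounds n t ltac:(lia)).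
    settle ltac:(rep_regs HM). apply (rep_partner _ _ _ _ _ _ HM); auto.
Qed.

Lemma stack_top_cell i j t0 rest blue p z m :
  sweep_rep n r b (SweepState i j (t0 :: rest) blue p) z m ->
  z (Z.to_nat (Z.of_nat (n + 27 + S (length rest)) - 1)) = Z.of_nat t0.
Proof.
  intros HM. replace (Z.to_nat _) with (n + 27 + length rest) by lia.
  rewrite (rep_stack _ _ _ _ _ _ HM) by (cbn; lia). apply (f_equal Z.of_nat), nth_rev_cons_last.
Qed.

Lemma red_pop_sim i j t0 rest p z m :
  sweep_inv n r b (SweepState i j (t0 :: rest) true p) ->
  sweep_rep n r b (SweepState i j (t0 :: rest) true p) z m -> i < n ->
  exists k z' m', k <= 12 /\ run_steps k (mkState 51 z m) = Some (mkState 22 z' m') /\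
    sweep_rep n r b (SweepState (S i) j rest true (upd p i t0)) z' m'.
Proof.
  intros HI HM Hi. pose proof (stack_fits _ _ _ _ _ HI) as Hlen. cbn in Hlen.
  pose proof (stack_top_cell _ _ _ _ _ _ _ _ HM) as Htop.
  pose proof (partner_cell_bounds n i Hi).
  destruct (Nat.lt_ge_cases i 13) as [H13|H13]; [exists 10|exists 11];
  do 2 eexists; (split; [lia|split; [run ltac:(rep_regs HM; rewrite ?Htop)|]]);
  rewrite ?(partner_cell_small n i H13), ?(partner_cell_large n i H13);
  (constructor; cbn [next_red next_blue stack stack_blue partner length];
   [ settle ltac:(rep_regs HM); lia .. | | | apply (rep_input _ _ _ _ _ _ HM) ]).
  all: try (intros d Hd; settle ltac:(rep_regs HM); rewrite (rep_stack _ _ _ _ _ _ HM) by (cbn; lia);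
            cbn [stack]; rewrite nth_rev_cons_lt by lia; reflexivity).
  all: intros t Ht; rewrite red_matched_all in Ht by reflexivity; cbn in Ht;
       destruct (Nat.eq_dec t i) as [ -> |Hne];
       [ settle ltac:(rep_regs HM); reflexivity
       | pose proof (partner_cell_inj n t i ltac:(lia) Hi Hne); pose proof (partner_cell_bounds n t ltac:(lia));
         settle ltac:(rep_regs HM); apply (rep_partner _ _ _ _ _ _ HM);
         rewrite red_matched_all by reflexivity; cbn; lia ].
Qed.

Lemma blue_push_sim i j st blue p z m :
  sweep_inv n r b (SweepState i j st blue p) -> sweep_rep n r b (SweepState i j st blue p) z m ->
  j < n -> (st = [] \/ blue = true) ->
  exists k z' m', k <= 12 /\ run_steps k (mkState 29 z m) = Some (mkState 22 z' m') /\
    sweep_rep n r b (SweepState i (S j) (j :: st) true p) z' m'.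
Proof.
  intros HI HM Hj Hst. pose proof (stack_fits _ _ _ _ _ HI) as Hlen.
  assert (Mf : forall t, red_matched (SweepState i (S j) (j :: st) true p) t ->
                        red_matched (SweepState i j st blue p) t /\ t < n).
  { intros t [Ht Hnot]. pose proof (inv_next_red _ _ _ _ HI). cbn in *.
    split; [split; [cbn; lia|]|lia]. destruct Hst as [ -> | -> ]; cbn; intuition discriminate. }
  destruct st as [|t0 rest]; [exists 9|destruct blue; [exists 11|destruct Hst; discriminate]];
  do 2 eexists; (split; [lia|split; [run ltac:(rep_regs HM)|]]);
  (constructor; cbn [next_red next_blue stack stack_blue partner length];
   [ settle ltac:(rep_regs HM); lia .. | | | apply (rep_input _ _ _ _ _ _ HM) ]).
  - intros d Hd. assert (d = 0) by lia. subst d. settle ltac:(rep_regs HM). cbn. lia.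
  - intros t [Ht Htn]%Mf. pose proof (partner_cell_bounds n t Htn).
    settle ltac:(rep_regs HM). apply (rep_partner _ _ _ _ _ _ HM); auto.
  - intros d Hd. cbn in Hlen. destruct (Nat.eq_dec d (S (length rest))) as [ -> |Hne].
    + settle ltac:(rep_regs HM). change (S (length rest)) with (length (t0 :: rest)).
      rewrite nth_rev_cons_last. lia.
    + settle ltac:(rep_regs HM). rewrite nth_rev_cons_lt by (cbn; lia).
      apply (rep_stack _ _ _ _ _ _ HM). cbn; lia.
  - intros t [Ht Htn]%Mf. pose proof (partner_cell_bounds n t Htn).
    settle ltac:(rep_regs HM). apply (rep_partner _ _ _ _ _ _ HM); auto.
Qed.

Lemma blue_pop_sim i j t0 rest p z m :
  sweep_inv n r b (SweepState i j (t0 :: rest) false p) ->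
  sweep_rep n r b (SweepState i j (t0 :: rest) false p) z m -> j < n ->
  exists k z' m', k <= 12 /\ run_steps k (mkState 29 z m) = Some (mkState 22 z' m') /\
    sweep_rep n r b (SweepState i (S j) rest false (upd p t0 j)) z' m'.
Proof.
  intros HI HM Hj. pose proof (stack_fits _ _ _ _ _ HI) as Hlen. cbn in Hlen.
  pose proof (stack_top_cell _ _ _ _ _ _ _ _ HM) as Htop.
  pose proof (inv_next_red _ _ _ _ HI) as Hi. cbn in Hi.
  assert (Ht0 : t0 < n) by (pose proof (inv_stack_processed _ _ _ _ HI t0 (or_introl eq_refl)); cbn in *; lia).
  assert (Hlt : forall t, red_matched (SweepState i j (t0 :: rest) false p) t -> t < n)
    by (intros t [Ht _]; cbn in *; lia).
  pose proof (partner_cell_bounds n t0 Ht0).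
  destruct (Nat.lt_ge_cases t0 13) as [H13|H13]; [exists 11|exists 12];
  do 2 eexists; (split; [lia|split; [run ltac:(rep_regs HM; rewrite ?Htop)|]]);
  rewrite ?(partner_cell_small n t0 H13), ?(partner_cell_large n t0 H13);
  (constructor; cbn [next_red next_blue stack stack_blue partner length];
   [ settle ltac:(rep_regs HM); lia .. | | | apply (rep_input _ _ _ _ _ _ HM) ]).
  all: try (intros d Hd; settle ltac:(rep_regs HM); rewrite (rep_stack _ _ _ _ _ _ HM) by (cbn; lia);
            cbn [stack]; rewrite nth_rev_cons_lt by lia; reflexivity).
  all: intros t [ -> |[Ht Hne]]%red_matched_blue_pop;
       [ settle ltac:(rep_regs HM); lia
       | pose proof (partner_cell_inj n t t0 (Hlt t Ht) Ht0 Hne); pose proof (partner_cell_bounds n t (Hlt t Ht));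
         settle ltac:(rep_regs HM); apply (rep_partner _ _ _ _ _ _ HM); auto ].
Qed.

Lemma sweep_rep_real s z m m' : sweep_rep n r b s z m ->
  (forall a, a < n + n -> m' (n + n + a) = m (n + n + a)) -> sweep_rep n r b s z m'.
Proof. intros [] H; constructor; auto. intros a Ha; rewrite H; auto. Qed.

Lemma dispatch_sim s z m :
  sweep_inv n r b s -> sweep_rep n r b s z m -> next_red s + next_blue s < n + n ->
  exists k m', k <= 6 /\
    run_steps k (mkState 22 z m) = Some (mkState (if red_comes_next n r b s then 51 else 29) z m') /\
    sweep_rep n r b s z m'.
Proof.
  destruct s as [i j st blue p]; intros HI HM Hij.
  pose proof (inv_next_red _ _ _ _ HI) as Hi. pose proof (inv_next_blue _ _ _ _ HI) as Hj.
  cbn in Hi, Hj, Hij. unfold red_comes_next; cbn [next_red next_blue].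
  destruct (Nat.ltb_spec i n); cbn [andb].
  2: { exists 2, m. split; [lia|split; [run ltac:(rep_regs HM)|auto]]. }
  destruct (Nat.eqb_spec j n); cbn [orb].
  1: { exists 2, m. split; [lia|split; [run ltac:(rep_regs HM)|auto]]. }
  assert (Hri : m (n + n + i) = r i).
  { rewrite (rep_input _ _ _ _ _ _ HM) by lia. unfold input_cell. decide_tests. reflexivity. }
  assert (Hbj : m (n + n + n + j) = b j).
  { replace (n + n + n + j) with (n + n + (n + j)) by lia.
    rewrite (rep_input _ _ _ _ _ _ HM) by lia. unfold input_cell. decide_tests. f_equal; lia. }
  destruct (Rlt_dec (r i) (b j)); [exists 5|exists 6]; eexists;
    (split; [lia|split; [run ltac:(rep_regs HM; rewrite ?Hri, ?Hbj)|]]);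
    (eapply sweep_rep_real; [apply HM|]); intros a Ha; simpl_upd; reflexivity.
Qed.

Lemma red_sim s z m :
  sweep_inv n r b s -> sweep_rep n r b s z m -> next_red s < n ->
  exists k z' m', k <= 12 /\ run_steps k (mkState 51 z m) = Some (mkState 22 z' m') /\
    sweep_rep n r b (sweep_red s) z' m'.
Proof.
  destruct s as [i j st blue p]; intros HI HM Hi; unfold sweep_red; cbn in *.
  destruct st as [|t rest]; [|destruct blue].
  - eapply red_push_sim; eauto.
  - eapply red_pop_sim; eauto.
  - eapply red_push_sim; eauto.
Qed.

Lemma blue_sim s z m :
  sweep_inv n r b s -> sweep_rep n r b s z m -> next_blue s < n ->
  exists k z' m', k <= 12 /\ run_steps k (mkState 29 z m) = Some (mkState 22 z' m') /\
    sweep_rep n r b (sweep_blue s) z' m'.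
Proof.
  destruct s as [i j st blue p]; intros HI HM Hj; unfold sweep_blue; cbn in *.
  destruct st as [|t rest]; [|destruct blue].
  - eapply blue_push_sim; eauto.
  - eapply blue_push_sim; eauto.
  - eapply blue_pop_sim; eauto.
Qed.

Lemma sweep_step_sim s z m :
  sweep_inv n r b s -> sweep_rep n r b s z m -> next_red s + next_blue s < n + n ->
  exists k z' m', k <= 18 /\ run_steps k (mkState 22 z m) = Some (mkState 22 z' m') /\
    sweep_rep n r b (sweep_step n r b s) z' m'.
Proof.
  intros HI HM Hij. pose proof (inv_next_red _ _ _ _ HI). pose proof (inv_next_blue _ _ _ _ HI).
  destruct (dispatch_sim s z m HI HM Hij) as (k1 & m1 & Hk1 & Hrun1 & HM1).
  assert (Hact : exists k z' m', k <= 12 /\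
    run_steps k (mkState (if red_comes_next n r b s then 51 else 29) z m1) = Some (mkState 22 z' m') /\
    sweep_rep n r b (sweep_step n r b s) z' m').
  { unfold sweep_step, red_comes_next in *.
    destruct (Nat.ltb_spec (next_red s) n); cbn [andb] in *; [|apply blue_sim; auto; lia].
    destruct (Nat.eqb_spec (next_blue s) n); cbn [orb] in *; [apply red_sim; auto|].
    destruct (Rlt_dec _ _); [apply red_sim|apply blue_sim]; auto; lia. }
  destruct Hact as (k2 & z' & m' & Hk2 & Hrun2 & HM2).
  exists (k1 + k2), z', m'. split; [lia|split; [eapply run_steps_add; eauto|auto]].
Qed.

Hypothesis Hinput : input_ok n r b.

Lemma sweep_loop_sim k s z m :
  sweep_ok n r b s -> sweep_rep n r b s z m -> next_red s + next_blue s + k = n + n ->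
  exists k' z' m', k' <= 18 * k /\ run_steps k' (mkState 22 z m) = Some (mkState 22 z' m') /\
    sweep_rep n r b (Nat.iter k (sweep_step n r b) s) z' m'.
Proof.
  revert s z m; induction k as [|k IH]; intros s z m Hs HM Hk.
  - exists 0, z, m. split; [lia|split; [reflexivity|auto]].
  - destruct (sweep_step_sim s z m (proj1 Hs) HM ltac:(lia)) as (k1 & z1 & m1 & Hk1 & Hr1 & HM1).
    pose proof (sweep_step_count n r b s).
    destruct (IH (sweep_step n r b s) z1 m1) as (k2 & z2 & m2 & Hk2 & Hr2 & HM2);
      [apply sweep_ok_step; auto; lia|auto|lia|].
    rewrite Nat.iter_succ_r.
    exists (k1 + k2), z2, m2. split; [lia|split; [eapply run_steps_add; eauto|auto]].
Qed.

End Simulation.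

Lemma unload_sim n r b blue p z m :
  sweep_rep n r b (SweepState n n [] blue p) z m ->
  exists s', run_steps 29 (mkState 22 z m) = Some s' /\ step matching_prog s' = None /\
    forall t, t < n -> zm s' (S t) = Z.of_nat (p t).
Proof.
  intros HM.
  assert (Hp : forall t, t < n -> z (partner_cell n t) = Z.of_nat (p t)).
  { intros t Ht. apply (rep_partner _ _ _ _ _ _ HM). split; cbn; [lia|tauto]. }
  destruct (Nat.eq_dec n 0) as [Hn|Hn].
  - eexists; split; [run ltac:(rep_regs HM)|split; [reflexivity|intros; lia]].
  - eexists; split; [run ltac:(rep_regs HM)|split; [reflexivity|]].
    intros t Ht. specialize (Hp t Ht). unfold partner_cell in Hp. cbn [zm].
    destruct (Nat.ltb_spec t 13).
    + do 13 (destruct t as [|t]; [settle ltac:(rep_regs HM); rewrite <- Hp; f_equal; lia|]). lia.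
    + settle ltac:(rep_regs HM). exact Hp.
Qed.

Theorem mainTheorem6 :
  exists (p : list instr) (c : nat),
    forall (n : nat) (r b : nat -> R),
      input_ok n r b ->
      exists s' : state,
        exec p (c * n + c) (init_state n r b) = Some s' /\
        (forall i, (i < n)%nat -> (0 <= zm s' (S i))%Z) /\
        is_min_nc_matching n r b (output_matching s').
Proof.
  exists matching_prog, 48. intros n r b Hok.
  destruct (copy_start n r b) as (z0 & m0 & R0 & C0).
  destruct (copy_loop n r b (n + n) 0 z0 m0 ltac:(lia) C0) as (z1 & m1 & R1 & C1).
  destruct (sweep_setup n r b z1 m1 C1) as (z2 & m2 & R2 & M2).
  destruct (sweep_loop_sim n r b Hok (n + n) sweep_start z2 m2 (sweep_ok_start n r b Hok) M2)
    as (k3 & z3 & m3 & Hk3 & R3 & M3); [cbn; lia|].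
  destruct (sweep_correct n r b Hok) as (blue & p & Hsweep & Hmin).
  change (Nat.iter (n + n) (sweep_step n r b) sweep_start) with (sweep n r b) in M3.
  rewrite Hsweep in M3.
  destruct (unload_sim n r b blue p z3 m3 M3) as (s' & R4 & Hhalt & Hout).
  exists s'. split; [|split].
  - eapply exec_of_run_steps; [|exact Hhalt|].
    + do 4 (eapply run_steps_add; [eassumption|]). exact R4.
    + lia.
  - intros t Ht. rewrite Hout by assumption. lia.
  - apply (is_min_nc_matching_ext n r b p); [|exact Hmin].
    intros t Ht. unfold output_matching. rewrite Hout by assumption. apply Nat2Z.id.
Qed.
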